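(* Fix $\lambda>0$ and a positive integer $d$, let $\tilde x_\lambda(d)$ be the unique positive solution of $d\,x=1+\lambda/(1+x)^d$, and let $\nu_\lambda(d)=\xi(d)=\sup_{x\ge0}\Xi(d,x)$ where $\Xi(d,x)=\frac{dx}{1+x}\cdot\frac{f_{d,\lambda}(x)}{1+f_{d,\lambda}(x)}$ and $f_{d,\lambda}(x)=\lambda/(1+x)^d$. Then: (1) $\nu_\lambda(d)=\frac{d\tilde x_\lambda(d)-1}{1+\tilde x_\lambda(d)}$, and $\nu_\lambda(d)=\frac1d$ when $\lambda=\lambda_c(d)=\frac{d^d}{(d-1)^{d+1}}$ (for $d\ge2$). (2) $\nu_\lambda(d)$ is increasing in $d$ for fixed $\lambda>0$. (3) $\nu_\lambda(d)$ is increasing in $\lambda$ for fixed $d>0$.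
   Context: Here $\Xi(d,x)$ is the function $d\big(\Phi(f_{d,\lambda}(x))f_{d,\lambda}(x)/((1+x)\Phi(x))\big)^2$ for $\Phi(x)=\frac{1}{2\sqrt{x(1+x)}}$ (the derivative of $\sinh^{-1}\sqrt x$), which simplifies to the stated form. In items (2)–(3), $d$ is treated as a real parameter with the same formulas. *)

From Stdlib Require Import Reals.
From Coquelicot Require Import Coquelicot.
Open Scope R_scope.

Definition f_dl (d l x : R) : R := l / Rpower (1 + x) d.

Definition Xi (d l x : R) : R :=
  d * x / (1 + x) * (f_dl d l x / (1 + f_dl d l x)).

(* nu_lambda(d) = xi(d) = sup_{x >= 0} Xi(d,x)  (least upper bound in Rbar,
   taken as a real; the set is bounded above by d, so this is finite). *)
Definition nu (d l : R) : R :=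
  real (Lub_Rbar (fun y => exists x, 0 <= x /\ y = Xi d l x)).

(* Put v := (d x - 1)/(1 + x) for the positive solution x of d x = 1 + λ/(1+x)^d
   and q := 1 - (1+v)/(d+1), so that (1+x) q = 1 and λ q^(d+1) = v.  Bernoulli's
   inequality for the exponent d+1 at the point (1+y) q then says exactly that
   Ξ(d,y) <= v, with equality at y = x, so ν_λ(d) = v.  Conversely
   λ = v / q^(d+1); this is nondecreasing in v, and strictly decreasing in d because
   t ↦ (1 - c/t)^t increases.  Both monotonicity statements follow by inverting this
   relation. *)
From Stdlib Require Import Reals Lra Lia.
From Coquelicot Require Import Coquelicot.
Open Scope R_scope.

Lemma Rpower_pos b e : 0 < Rpower b e.
Proof. exact (exp_pos _). Qed.

Lemma Rpower_1_base e : Rpower 1 e = 1.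
Proof. unfold Rpower; now rewrite ln_1, Rmult_0_r, exp_0. Qed.

Lemma Rpower_sub1_sign e c : 0 < e -> -1 < c -> c <> 0 ->
  0 < (Rpower (1 + c) e - 1) * c.
Proof.
intros He Hc Hc0; unfold Rpower.
destruct (Rlt_or_le 0 c) as [Hpos | Hneg].
- assert (0 < ln (1 + c)) by (rewrite <- ln_1; apply ln_increasing; lra).
  assert (1 < exp (e * ln (1 + c))) by (rewrite <- exp_0 at 1; apply exp_increasing; nra).
  nra.
- assert (ln (1 + c) < 0) by (rewrite <- ln_1; apply ln_increasing; lra).
  assert (exp (e * ln (1 + c)) < 1) by (rewrite <- exp_0 at 2; apply exp_increasing; nra).
  nra.
Qed.

Lemma Bernoulli_Rpower_lt a s : 1 < a -> -1 < s -> s <> 0 ->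
  1 + a * s < Rpower (1 + s) a.
Proof.
intros Ha Hs Hs0.
set (g t := Rpower (1 + t) a - 1 - a * t).
assert (Dg : forall c, -1 < c ->
  derivable_pt_lim g c (a * (Rpower (1 + c) (a - 1) - 1))).
{ intros c Hc; apply is_derive_Reals; unfold g, Rpower.
  auto_derive; [lra |].
  replace ((a - 1) * ln (1 + c)) with (a * ln (1 + c) + - ln (1 + c)) by ring.
  rewrite exp_plus, exp_Ropp, exp_ln by lra; field; lra. }
assert (g0 : g 0 = 0) by (unfold g; rewrite Rplus_0_r, Rpower_1_base; ring).
enough (0 < g s) by (unfold g in *; lra).
destruct (Rlt_or_le 0 s) as [Hpos | Hneg].
- destruct (MVT_cor2 g _ 0 s Hpos (fun c Hc => Dg c ltac:(lra))) as [c [E Hc]].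
  assert (Hsign := Rpower_sub1_sign (a - 1) c ltac:(lra) ltac:(lra) ltac:(lra)).
  assert (0 < (Rpower (1 + c) (a - 1) - 1) * s) by nra.
  nra.
- destruct (MVT_cor2 g _ s 0 ltac:(lra) (fun c Hc => Dg c ltac:(lra))) as [c [E Hc]].
  assert (Hsign := Rpower_sub1_sign (a - 1) c ltac:(lra) ltac:(lra) ltac:(lra)).
  assert (Rpower (1 + c) (a - 1) < 1) by nra.
  assert (0 < (1 - Rpower (1 + c) (a - 1)) * (0 - s)) by (apply Rmult_lt_0_compat; lra).
  nra.
Qed.

Lemma Bernoulli_Rpower_le a s : 1 <= a -> -1 < s -> 1 + a * s <= Rpower (1 + s) a.
Proof.
intros Ha Hs.
destruct (Req_dec s 0) as [-> | Hs0].
- rewrite Rplus_0_r, Rpower_1_base; lra.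
- destruct (Req_dec a 1) as [-> | Ha1].
  + rewrite Rpower_1; lra.
  + left; apply Bernoulli_Rpower_lt; lra.
Qed.

Lemma Rpower_compound_lt c t1 t2 : 0 < c < t1 -> t1 < t2 ->
  Rpower (1 - c / t1) t1 < Rpower (1 - c / t2) t2.
Proof.
intros Hc Ht.
assert (Hq1 : 0 < 1 - c / t1).
{ apply (Rmult_lt_reg_r t1); [lra |].
  replace ((1 - c / t1) * t1) with (t1 - c) by (field; lra); lra. }
assert (Hb : 1 - c / t1 < Rpower (1 - c / t2) (t2 / t1)).
{ assert (Ha : 1 < t2 / t1).
  { apply (Rmult_lt_reg_r t1); [lra |].
    replace (t2 / t1 * t1) with t2 by (field; lra); lra. }
  assert (Hs : 0 < c / t2 < 1).
  { split; [apply Rdiv_lt_0_compat; lra |].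
    apply (Rmult_lt_reg_r t2); [lra |].
    replace (c / t2 * t2) with c by (field; lra); lra. }
  replace (1 - c / t1) with (1 + t2 / t1 * - (c / t2)) by (field; lra).
  replace (1 - c / t2) with (1 + - (c / t2)) by ring.
  apply Bernoulli_Rpower_lt; lra. }
replace t2 with (t2 / t1 * t1) at 2 by (field; lra).
rewrite <- Rpower_mult.
apply Rlt_Rpower_l; lra.
Qed.

Section Solution.

Variables d l x : R.
Hypotheses (Hd : 0 < d) (Hl : 0 < l) (Hx : 0 < x)
  (Hsol : d * x = 1 + l / Rpower (1 + x) d).

Let v := (d * x - 1) / (1 + x).
Let q := 1 - (1 + v) / (d + 1).

Lemma sol_f_dl : l / Rpower (1 + x) d = v * (1 + x).
Proof. unfold v; rewrite Hsol; field; split; [apply Rgt_not_eq, Rpower_pos | lra]. Qed.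

Lemma sol_nu_pos : 0 < v.
Proof.
pose proof sol_f_dl.
assert (0 < l / Rpower (1 + x) d) by (apply Rdiv_lt_0_compat; [lra | apply Rpower_pos]).
nra.
Qed.

Lemma sol_scale : (1 + x) * q = 1.
Proof. unfold q, v; field; lra. Qed.

Lemma sol_nu_lt : v < d.
Proof.
unfold v; apply (Rmult_lt_reg_r (1 + x)); [lra |].
replace ((d * x - 1) / (1 + x) * (1 + x)) with (d * x - 1) by (field; lra); lra.
Qed.

Lemma sol_scale_pos : 0 < q.
Proof. pose proof sol_scale; nra. Qed.

Lemma sol_lambda : l * Rpower q (d + 1) = v.
Proof.
assert (Hl' : l = v * Rpower (1 + x) (d + 1)).
{ rewrite Rpower_plus, Rpower_1 by lra.
  replace (v * (Rpower (1 + x) d * (1 + x))) with (v * (1 + x) * Rpower (1 + x) d) by ring.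
  rewrite <- sol_f_dl; field; apply Rgt_not_eq, Rpower_pos. }
rewrite Hl', Rmult_assoc, Rpower_mult_distr by (lra || exact sol_scale_pos).
now rewrite sol_scale, Rpower_1_base, Rmult_1_r.
Qed.

Lemma Xi_sol : Xi d l x = v.
Proof.
unfold Xi, f_dl; rewrite sol_f_dl.
pose proof sol_nu_pos; unfold v in *; field; split; nra.
Qed.

Lemma Xi_le_sol y : 0 <= y -> Xi d l y <= v.
Proof.
intro Hy.
pose proof sol_scale_pos as Hq; pose proof sol_nu_pos as Hv.
set (F := l / Rpower (1 + y) d).
assert (HF : 0 < F) by (apply Rdiv_lt_0_compat; [lra | apply Rpower_pos]).
(* Bernoulli at the point (1+y) q, which equals 1 at y = x *)
assert (Hbern : d * y - v * (1 + y) <= Rpower ((1 + y) * q) (d + 1)).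
{ replace (d * y - v * (1 + y)) with (1 + (d + 1) * ((1 + y) * q - 1))
    by (unfold q; field; lra).
  replace ((1 + y) * q) with (1 + ((1 + y) * q - 1)) at 2 by ring.
  apply Bernoulli_Rpower_le; nra. }
assert (HFb : F * (d * y - v * (1 + y)) <= v * (1 + y)).
{ rewrite <- Rpower_mult_distr, Rpower_plus, Rpower_1 in Hbern by lra.
  replace (Rpower q (d + 1)) with (v / l) in Hbern by (rewrite <- sol_lambda; field; lra).
  apply Rmult_le_compat_l with (r := F) in Hbern; [| lra].
  replace (F * (Rpower (1 + y) d * (1 + y) * (v / l))) with (v * (1 + y)) in Hbern
    by (unfold F; field; split; [lra | apply Rgt_not_eq, Rpower_pos]).
  exact Hbern. }
unfold Xi, f_dl; fold F.
apply (Rmult_le_reg_r ((1 + y) * (1 + F))); [nra |].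
replace (d * y / (1 + y) * (F / (1 + F)) * ((1 + y) * (1 + F))) with (d * y * F)
  by (field; lra).
nra.
Qed.

Lemma nu_sol : nu d l = v.
Proof.
unfold nu; rewrite (is_lub_Rbar_unique _ (Finite v)); [reflexivity |]; split.
- intros z [y [Hy ->]]; exact (Xi_le_sol y Hy).
- intros b Hb; apply Hb; exists x; split; [lra | symmetry; exact Xi_sol].
Qed.

End Solution.

Lemma sol_exists d l : 0 < d -> 0 < l ->
  exists x, 0 < x /\ d * x = 1 + l / Rpower (1 + x) d.
Proof.
intros Hd Hl.
set (h t := d * t - 1 - l / Rpower (1 + t) d).
set (b := (1 + l) / d).
assert (Hb : 0 < b) by (apply Rdiv_lt_0_compat; lra).
assert (Hc : forall t, 0 <= t <= b -> continuity_pt h t).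
{ intros t Ht; apply derivable_continuous_pt.
  eexists; apply is_derive_Reals; unfold h, Rpower.
  auto_derive; [repeat split; [lra | apply Rgt_not_eq, exp_pos] | reflexivity]. }
assert (H0 : h 0 < 0) by (unfold h; rewrite Rplus_0_r, Rpower_1_base; lra).
assert (Hhb : 0 < h b).
{ assert (HP : 1 < Rpower (1 + b) d).
  { rewrite <- (Rpower_O (1 + b)) at 1 by lra; apply Rpower_lt; lra. }
  assert (l / Rpower (1 + b) d < l).
  { apply (Rmult_lt_reg_r (Rpower (1 + b) d)); [lra |].
    replace (l / Rpower (1 + b) d * Rpower (1 + b) d) with l by (field; lra); nra. }
  unfold h; replace (d * b - 1) with l by (unfold b; field; lra); lra. }
destruct (Ranalysis5.IVT_interv h 0 b Hc Hb H0 Hhb) as [z [Hz Ez]].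
exists z; destruct (Req_dec z 0) as [-> | Hz0]; [lra |].
split; [lra | unfold h in Ez; lra].
Qed.

Lemma sol_unique d l x y : 0 < d -> 0 < l -> 0 < x -> 0 < y ->
  d * x = 1 + l / Rpower (1 + x) d -> d * y = 1 + l / Rpower (1 + y) d -> x = y.
Proof.
intros Hd Hl Hx Hy Ex Ey.
assert (Hdec : forall a b, 0 < a < b -> l / Rpower (1 + b) d < l / Rpower (1 + a) d).
{ intros a b Hab.
  assert (Rpower (1 + a) d < Rpower (1 + b) d) by (apply Rlt_Rpower_l; lra).
  apply Rmult_lt_compat_l; [lra |].
  apply Rinv_lt_contravar; [apply Rmult_lt_0_compat; apply Rpower_pos | lra]. }
destruct (Rtotal_order x y) as [H | [H | H]]; [| exact H |].
- pose proof (Hdec x y ltac:(lra)); nra.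
- pose proof (Hdec y x ltac:(lra)); nra.
Qed.

Definition lambda_of_nu (d v : R) : R := v / Rpower (1 - (1 + v) / (d + 1)) (d + 1).

Lemma lambda_of_nu_sol d l x : 0 < d -> 0 < l -> 0 < x ->
  d * x = 1 + l / Rpower (1 + x) d ->
  lambda_of_nu d ((d * x - 1) / (1 + x)) = l.
Proof.
intros Hd Hl Hx Hsol; unfold lambda_of_nu.
set (P := Rpower _ (d + 1)).
assert (E : l * P = (d * x - 1) / (1 + x)) by (apply sol_lambda; assumption).
rewrite <- E; field; apply Rgt_not_eq, Rpower_pos.
Qed.

Lemma lambda_of_nu_le_nu d v1 v2 : 0 < v1 -> v1 <= v2 -> v2 < d ->
  lambda_of_nu d v1 <= lambda_of_nu d v2.
Proof.
intros Hv1 Hv Hv2; unfold lambda_of_nu.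
set (P1 := Rpower _ (d + 1)); set (P2 := Rpower _ (d + 1)).
assert (HP : P2 <= P1).
{ apply Rle_Rpower_l; [lra | split].
  - replace (1 - (1 + v2) / (d + 1)) with ((d - v2) / (d + 1)) by (field; lra).
    apply Rdiv_lt_0_compat; lra.
  - apply Rplus_le_compat_l, Ropp_le_contravar, Rmult_le_compat_r; [|lra].
    apply Rlt_le, Rinv_0_lt_compat; lra. }
assert (0 < P2) by apply Rpower_pos.
apply (Rmult_le_reg_r (P1 * P2)); [nra |].
replace (v1 / P1 * (P1 * P2)) with (v1 * P2) by (field; lra).
replace (v2 / P2 * (P1 * P2)) with (v2 * P1) by (field; lra).
nra.
Qed.

Lemma lambda_of_nu_lt_d v d1 d2 : 0 < v < d1 -> d1 < d2 ->
  lambda_of_nu d2 v < lambda_of_nu d1 v.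
Proof.
intros Hv Hd; unfold lambda_of_nu.
assert (Hc := Rpower_compound_lt (1 + v) (d1 + 1) (d2 + 1) ltac:(lra) ltac:(lra)).
assert (0 < Rpower (1 - (1 + v) / (d1 + 1)) (d1 + 1)) by apply Rpower_pos.
apply Rmult_lt_compat_l; [lra |].
apply Rinv_lt_contravar; [nra | exact Hc].
Qed.

Lemma nu_lambda_c (n : nat) : (2 <= n)%nat ->
  nu (INR n) (INR n ^ n / (INR n - 1) ^ (n + 1)) = 1 / INR n.
Proof.
intro Hn; set (D := INR n).
assert (HD : 2 <= D) by (apply (le_INR 2); lia).
assert (0 < (D - 1) ^ n) by (apply pow_lt; lra).
assert (0 < D ^ n) by (apply pow_lt; lra).
assert (Hl : 0 < D ^ n / (D - 1) ^ (n + 1)) by (apply Rdiv_lt_0_compat; [| apply pow_lt]; lra).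
assert (Hx : 0 < 1 / (D - 1)) by (apply Rdiv_lt_0_compat; lra).
assert (Hsol : D * (1 / (D - 1)) = 1 + D ^ n / (D - 1) ^ (n + 1) / Rpower (1 + 1 / (D - 1)) D).
{ unfold D; rewrite Rpower_pow by (fold D; lra); fold D.
  replace (1 + 1 / (D - 1)) with (D * / (D - 1)) by (field; lra).
  rewrite Rpow_mult_distr, pow_inv, pow_add, pow_1.
  field; repeat split; lra. }
rewrite (nu_sol D _ (1 / (D - 1)) ltac:(lra) Hl Hx Hsol); field; lra.
Qed.

Lemma nu_increasing_d l d1 d2 : 0 < l -> 0 < d1 -> d1 < d2 -> nu d1 l < nu d2 l.
Proof.
intros Hl Hd1 Hd.
destruct (sol_exists d1 l Hd1 Hl) as [x1 [Hx1 E1]].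
destruct (sol_exists d2 l ltac:(lra) Hl) as [x2 [Hx2 E2]].
rewrite (nu_sol d1 l x1), (nu_sol d2 l x2) by (lra || assumption).
pose proof (sol_nu_pos d1 l x1 Hl Hx1 E1) as Hv1.
pose proof (sol_nu_lt d1 x1 Hd1 Hx1) as Hv1d.
pose proof (sol_nu_pos d2 l x2 Hl Hx2 E2) as Hv2.
pose proof (lambda_of_nu_sol d1 l x1 Hd1 Hl Hx1 E1) as L1.
pose proof (lambda_of_nu_sol d2 l x2 ltac:(lra) Hl Hx2 E2) as L2.
set (v1 := (d1 * x1 - 1) / (1 + x1)) in *; set (v2 := (d2 * x2 - 1) / (1 + x2)) in *.
apply Rnot_le_lt; intro Hle.
pose proof (lambda_of_nu_le_nu d2 v2 v1 Hv2 Hle ltac:(lra)).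
pose proof (lambda_of_nu_lt_d v1 d1 d2 ltac:(lra) Hd).
lra.
Qed.

Lemma nu_increasing_l d l1 l2 : 0 < d -> 0 < l1 -> l1 < l2 -> nu d l1 < nu d l2.
Proof.
intros Hd Hl1 Hl.
destruct (sol_exists d l1 Hd Hl1) as [x1 [Hx1 E1]].
destruct (sol_exists d l2 Hd ltac:(lra)) as [x2 [Hx2 E2]].
rewrite (nu_sol d l1 x1), (nu_sol d l2 x2) by (lra || assumption).
pose proof (sol_nu_lt d x1 Hd Hx1) as Hv1.
pose proof (sol_nu_pos d l2 x2 ltac:(lra) Hx2 E2) as Hv2.
pose proof (lambda_of_nu_sol d l1 x1 Hd Hl1 Hx1 E1) as L1.
pose proof (lambda_of_nu_sol d l2 x2 Hd ltac:(lra) Hx2 E2) as L2.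
set (v1 := (d * x1 - 1) / (1 + x1)) in *; set (v2 := (d * x2 - 1) / (1 + x2)) in *.
apply Rnot_le_lt; intro Hle.
pose proof (lambda_of_nu_le_nu d v2 v1 Hv2 Hle Hv1).
lra.
Qed.

Theorem lemma4p3 :
  (forall (d : nat) (l : R), (0 < d)%nat -> 0 < l ->
     (exists! x, 0 < x /\ INR d * x = 1 + l / Rpower (1 + x) (INR d)) /\
     (forall xt, 0 < xt -> INR d * xt = 1 + l / Rpower (1 + xt) (INR d) ->
        nu (INR d) l = (INR d * xt - 1) / (1 + xt))) /\
  (forall d : nat, (2 <= d)%nat ->
     nu (INR d) (INR d ^ d / (INR d - 1) ^ (d + 1)) = 1 / INR d) /\
  (forall l d1 d2 : R, 0 < l -> 0 < d1 -> d1 < d2 -> nu d1 l < nu d2 l) /\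
  (forall d l1 l2 : R, 0 < d -> 0 < l1 -> l1 < l2 -> nu d l1 < nu d l2).
Proof.
split; [| split; [exact nu_lambda_c | split; [exact nu_increasing_d | exact nu_increasing_l]]].
intros n l Hn Hl; assert (Hd : 0 < INR n) by (apply lt_0_INR; lia).
split.
- destruct (sol_exists _ _ Hd Hl) as [x [Hx E]].
  exists x; split; [split; assumption |].
  intros y [Hy Ey]; exact (sol_unique _ _ _ _ Hd Hl Hx Hy E Ey).
- intros xt Hxt Ext; exact (nu_sol _ _ _ Hd Hl Hxt Ext).
Qed.
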